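(* Let $\mathcal{F}=(X,\leq)$ be a poset and $j$ a nucleus on $\mathit{Up}(\mathcal{F})$. Let $I^{\mathcal{F},j}$ be a nuclear interpretation on $(\mathcal{F},j)$ that is consistent with $\vdash_\mathsf{IPC}$. Then $I^{\mathcal{F},j}=I^{\mathcal{F},j}_{\mathrm{st}}$, i.e. for all $j$-fixed upsets $U,V$: $I^{\mathcal{F},j}(\bot)=j\emptyset$, $I^{\mathcal{F},j}(\land)(U,V)=U\cap V$, $I^{\mathcal{F},j}(\lor)(U,V)=j(U\cup V)$, and $I^{\mathcal{F},j}(\to)(U,V)=\{x\in X: {\uparrow}x\cap U\subseteq V\}$.
   Context: The propositional language is generated by $\varphi ::= p \mid \bot \mid \varphi\land\varphi\mid\varphi\lor\varphi\mid\varphi\to\varphi$ with $p$ ranging over a countably infinite set $\mathit{Prop}$ of propositional variables; $\vdash_\mathsf{IPC}$ is the usual single-conclusion consequence relation of intuitionistic propositional logic (premises form a set, possibly empty). For a poset $\mathcal{F}=(X,\leq)$, $\mathit{Up}(\mathcal{F})$ is the set of upward closed subsets of $X$, and ${\uparrow}x=\{y: x\leq y\}$. A nucleus on $\mathit{Up}(\mathcal{F})$ is a map $j:\mathit{Up}(\mathcal{F})\to\mathit{Up}(\mathcal{F})$ with $U\subseteq jU$, $jjU\subseteq jU$, and $j(U\cap V)=jU\cap jV$ for all upsets $U,V$; $U$ is fixed if $jU=U$. A nuclear interpretation $I^{\mathcal{F},j}$ assigns to $\bot$ a fixed upset and to each of $\land,\lor,\to$ a binary function mapping pairs of fixed upsets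 to fixed upsets. A valuation is any map $v:\mathit{Prop}\to\mathit{Up}(\mathcal{F})$; semantic values are defined compositionally by $[\![p]\!]_v=j(v(p))$ and $[\![\#(\varphi_1,\dots,\varphi_n)]\!]_v=I^{\mathcal{F},j}(\#)([\![\varphi_1]\!]_v,\dots,[\![\varphi_n]\!]_v)$ (so all semantic values are fixed upsets). The interpretation is consistent with a consequence relation $\vdash$ if whenever $\Gamma\vdash\varphi$, for every valuation $v$, $\bigcap_{\psi\in\Gamma}[\![\psi]\!]_v\subseteq[\![\varphi]\!]_v$, where $\bigcap\emptyset=X$. The standard nuclear interpretation $I^{\mathcal{F},j}_{\mathrm{st}}$ is the one given by the formulas in the claim. *)

Set Implicit Arguments.

Inductive form : Type :=
| Var : nat -> form
| Bot : form
| And : form -> form -> form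
| Or  : form -> form -> form
| Imp : form -> form -> form.

Inductive ipc_axiom : form -> Prop :=
| AxK  : forall A B, ipc_axiom (Imp A (Imp B A))
| AxS  : forall A B C, ipc_axiom (Imp (Imp A (Imp B C)) (Imp (Imp A B) (Imp A C)))
| AxAndE1 : forall A B, ipc_axiom (Imp (And A B) A)
| AxAndE2 : forall A B, ipc_axiom (Imp (And A B) B)
| AxAndI  : forall A B, ipc_axiom (Imp A (Imp B (And A B)))
| AxOrI1  : forall A B, ipc_axiom (Imp A (Or A B))
| AxOrI2  : forall A B, ipc_axiom (Imp B (Or A B))
| AxOrE   : forall A B C, ipc_axiom (Imp (Imp A C) (Imp (Imp B C) (Imp (Or A B) C)))
| AxEFQ   : forall A, ipc_axiom (Imp Bot A).

Inductive ipc_derives (Gamma : form -> Prop) : form -> Prop :=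
| d_ax  : forall A, ipc_axiom A -> ipc_derives Gamma A
| d_hyp : forall A, Gamma A -> ipc_derives Gamma A
| d_mp  : forall A B, ipc_derives Gamma (Imp A B) -> ipc_derives Gamma A ->
          ipc_derives Gamma B.

Section Semantics.
Variables (X : Type) (le : X -> X -> Prop).

Definition is_poset : Prop :=
  (forall x, le x x) /\
  (forall x y z, le x y -> le y z -> le x z) /\
  (forall x y, le x y -> le y x -> x = y).

Definition subset (U V : X -> Prop) : Prop := forall x, U x -> V x.
Definition cap (U V : X -> Prop) : X -> Prop := fun x => U x /\ V x.
Definition cup (U V : X -> Prop) : X -> Prop := fun x => U x \/ V x.
Definition empty : X -> Prop := fun _ => False.
Definition up (x : X) : X -> Prop := fun y => le x y.

Definition upset (U : X -> Prop) : Prop := forall x y, le x y -> U x -> U y.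

(** a nucleus on Up(F) (only its behaviour on upsets matters) *)
Definition nucleus (j : (X -> Prop) -> (X -> Prop)) : Prop :=
  (forall U, upset U -> upset (j U)) /\
  (forall U, upset U -> subset U (j U)) /\
  (forall U, upset U -> subset (j (j U)) (j U)) /\
  (forall U V, upset U -> upset V -> j (cap U V) = cap (j U) (j V)).

Definition fixed (j : (X -> Prop) -> (X -> Prop)) (U : X -> Prop) : Prop :=
  upset U /\ j U = U.

Record interp := Interp {
  I_bot : X -> Prop;
  I_and : (X -> Prop) -> (X -> Prop) -> (X -> Prop);
  I_or  : (X -> Prop) -> (X -> Prop) -> (X -> Prop);
  I_imp : (X -> Prop) -> (X -> Prop) -> (X -> Prop) }.

Definition nuclear_interp (j : (X -> Prop) -> (X -> Prop)) (I : interp) : Prop :=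
  fixed j (I_bot I) /\
  (forall U V, fixed j U -> fixed j V -> fixed j (I_and I U V)) /\
  (forall U V, fixed j U -> fixed j V -> fixed j (I_or I U V)) /\
  (forall U V, fixed j U -> fixed j V -> fixed j (I_imp I U V)).

Fixpoint sem (j : (X -> Prop) -> (X -> Prop)) (I : interp)
    (v : nat -> (X -> Prop)) (phi : form) : X -> Prop :=
  match phi with
  | Var p => j (v p)
  | Bot => I_bot I
  | And a b => I_and I (sem j I v a) (sem j I v b)
  | Or a b => I_or I (sem j I v a) (sem j I v b)
  | Imp a b => I_imp I (sem j I v a) (sem j I v b)
  end.

Definition valuation (v : nat -> (X -> Prop)) : Prop := forall p, upset (v p).

(** consistency with IPC: Gamma |- phi implies /\Gamma ⊆ [[phi]] for all
    valuations (the empty intersection being X) *)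
Definition consistent_IPC (j : (X -> Prop) -> (X -> Prop)) (I : interp) : Prop :=
  forall (Gamma : form -> Prop) (phi : form), ipc_derives Gamma phi ->
  forall v, valuation v ->
  forall x, (forall psi, Gamma psi -> sem j I v psi x) -> sem j I v phi x.

Definition heyting_imp (U V : X -> Prop) : X -> Prop :=
  fun x => subset (cap (up x) U) V.

End Semantics.

From Stdlib Require Import List FunctionalExtensionality PropExtensionality.
Import ListNotations.

(* Consistency turns every IPC rule with premises in the variables p, q, r into
   an inclusion between semantic values, for any fixed upsets assigned to the
   variables.  Ex falso gives [I(⊥) ⊆ j ∅], and [I(⊥)] is fixed; the rules for
   conjunction force [I(∧) = ∩].  Write [U ⇒ V = {x | ↑x ∩ U ⊆ V}].  Modus
   ponens and upward closure give [I(→)(U,V) ⊆ U ⇒ V].  Conversely, let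
   [x ∈ U ⇒ V] and send r to [j(↑x)]: [r ⊢ p → p ∧ r] puts x in
   [I(→)(U, U ∩ j(↑x))], where [U ∩ j(↑x) = j(U ∩ ↑x) ⊆ j V = V], and
   [p → q ∧ r ⊢ p → r] makes [I(→)] monotone in its second argument.  For
   disjunction, ∨-introduction gives [j(U ∪ V) ⊆ I(∨)(U,V)] since the latter
   is fixed, and ∨-elimination with r sent to [U ∪ V] gives the converse, the
   premises [p → r] and [q → r] being valid by the description of [I(→)]. *)

Lemma pred_ext {X : Type} (U V : X -> Prop) : (forall x, U x <-> V x) -> U = V.
Proof.
  intro HUV. apply functional_extensionality; intro x.
  apply propositional_extensionality, HUV.
Qed.

Lemma ipc_deduction (Gamma : form -> Prop) A B :
  ipc_derives (fun psi => A = psi \/ Gamma psi) B -> ipc_derives Gamma (Imp A B).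
Proof.
  induction 1 as [C HC | C [<- | HC] | C D _ IHCD _ IHC].
  - apply (d_mp (d_ax _ (AxK C A))), d_ax, HC.
  - apply (d_mp (d_mp (d_ax _ (AxS A (Imp A A) A)) (d_ax _ (AxK _ _)))).
    apply d_ax, AxK.
  - apply (d_mp (d_ax _ (AxK C A))), d_hyp, HC.
  - exact (d_mp (d_mp (d_ax _ (AxS _ _ _)) IHCD) IHC).
Qed.

Definition entails (Gamma : list form) (phi : form) : Prop :=
  ipc_derives (fun psi => In psi Gamma) phi.

Lemma entails_hyp Gamma A : In A Gamma -> entails Gamma A.
Proof. exact (d_hyp (fun psi => In psi Gamma) A). Qed.

Lemma entails_mp Gamma A B : entails Gamma (Imp A B) -> entails Gamma A -> entails Gamma B.
Proof. apply d_mp. Qed.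

Lemma entails_axiom_mp {Gamma A B} : ipc_axiom (Imp A B) -> entails Gamma A -> entails Gamma B.
Proof. intro Hax. apply entails_mp, d_ax, Hax. Qed.

Lemma entails_deduction Gamma A B : entails (A :: Gamma) B -> entails Gamma (Imp A B).
Proof. apply (ipc_deduction (fun psi => In psi Gamma)). Qed.

Local Notation p := (Var 0).
Local Notation q := (Var 1).
Local Notation r := (Var 2).

Ltac premise := apply entails_hyp; simpl; auto.

Lemma bot_elim : entails [Bot] p.
Proof. apply (entails_axiom_mp (AxEFQ p)). premise. Qed.

Lemma and_elim_l : entails [And p q] p.
Proof. apply (entails_axiom_mp (AxAndE1 p q)). premise. Qed.

Lemma and_elim_r : entails [And p q] q.
Proof. apply (entails_axiom_mp (AxAndE2 p q)). premise. Qed.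

Lemma and_intro : entails [p; q] (And p q).
Proof.
  apply (entails_mp _ q); [apply (entails_axiom_mp (AxAndI p q)) |]; premise.
Qed.

Lemma imp_elim : entails [Imp p q; p] q.
Proof. apply (entails_mp _ p); premise. Qed.

Lemma imp_and_elim_r : entails [Imp p (And q r)] (Imp p r).
Proof.
  apply entails_deduction, (entails_axiom_mp (AxAndE2 q r)).
  apply (entails_mp _ p); premise.
Qed.

Lemma imp_and_intro : entails [r] (Imp p (And p r)).
Proof.
  apply entails_deduction, (entails_mp _ r); [apply (entails_axiom_mp (AxAndI p r)) |];
    premise.
Qed.

Lemma or_intro_l : entails [p] (Or p q).
Proof. apply (entails_axiom_mp (AxOrI1 p q)). premise. Qed.

Lemma or_intro_r : entails [q] (Or p q).
Proof. apply (entails_axiom_mp (AxOrI2 p q)). premise. Qed.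

Lemma or_elim : entails [Imp p r; Imp q r; Or p q] r.
Proof.
  apply (entails_mp _ (Or p q)); [| premise].
  apply (entails_mp _ (Imp q r)); [| premise].
  apply (entails_axiom_mp (AxOrE p q r)). premise.
Qed.

Lemma cap_eq_l {X : Type} {U V : X -> Prop} : subset U V -> cap U V = U.
Proof.
  intro HUV. apply pred_ext; intro x; split; [intros [HUx _] | intro HUx; split]; auto.
Qed.

Section Nucleus.

Variables (X : Type) (le : X -> X -> Prop) (j : (X -> Prop) -> X -> Prop).

Hypothesis le_refl : forall x, le x x.
Hypothesis le_trans : forall x y z, le x y -> le y z -> le x z.

Hypothesis j_upset : forall U, upset le U -> upset le (j U).
Hypothesis j_inflationary : forall U, upset le U -> subset U (j U).
Hypothesis j_idempotent : forall U, upset le U -> subset (j (j U)) (j U).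
Hypothesis j_cap : forall U V, upset le U -> upset le V -> j (cap U V) = cap (j U) (j V).

Lemma upset_empty : upset le (@empty X).
Proof. intros x y _ []. Qed.

Lemma upset_cap U V : upset le U -> upset le V -> upset le (cap U V).
Proof. intros HU HV x y Hxy [HUx HVx]. split; eauto. Qed.

Lemma upset_cup U V : upset le U -> upset le V -> upset le (cup U V).
Proof. intros HU HV x y Hxy [HUx | HVx]; [left | right]; eauto. Qed.

Lemma upset_up x : upset le (up le x).
Proof. intros y z Hyz Hxy. exact (le_trans _ _ _ Hxy Hyz). Qed.

Lemma j_monotone U V : upset le U -> upset le V -> subset U V -> subset (j U) (j V).
Proof.
  intros HU HV HUV x HjUx.
  rewrite <- (cap_eq_l HUV), j_cap in HjUx by assumption.
  apply HjUx.
Qed.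

Lemma fixed_j {U} : upset le U -> fixed le j (j U).
Proof.
  intro HU. split; [now apply j_upset |].
  apply pred_ext; split; [now apply j_idempotent | now apply j_inflationary, j_upset].
Qed.

Lemma j_least U V : upset le U -> fixed le j V -> subset U V -> subset (j U) V.
Proof.
  intros HU [HV HjV] HUV. rewrite <- HjV. now apply j_monotone.
Qed.

Definition val3 (U V W : X -> Prop) : nat -> X -> Prop :=
  fun n => match n with 0 => U | 1 => V | _ => W end.

Section Interpretation.

Variable I : interp X.

Hypothesis I_bot_fixed : fixed le j (I_bot I).
Hypothesis I_or_fixed : forall U V, fixed le j U -> fixed le j V -> fixed le j (I_or I U V).
Hypothesis I_imp_fixed : forall U V, fixed le j U -> fixed le j V -> fixed le j (I_imp I U V).
Hypothesis I_consistent : consistent_IPC le j I.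

Lemma entails_sound {Gamma phi U V W x} :
  entails Gamma phi -> upset le U -> upset le V -> upset le W ->
  (forall psi, In psi Gamma -> sem j I (val3 U V W) psi x) -> sem j I (val3 U V W) phi x.
Proof.
  intros Hphi HU HV HW. apply (I_consistent _ _ Hphi).
  intros [| [|]]; assumption.
Qed.

Lemma I_bot_eq : I_bot I = j (@empty X).
Proof.
  apply pred_ext; intro x; split.
  - intro Hx. apply (entails_sound bot_elim upset_empty upset_empty upset_empty).
    intros psi [<- | []]. exact Hx.
  - apply j_least; [apply upset_empty | exact I_bot_fixed | intros _ []].
Qed.

Section FixedArguments.

Variables U V : X -> Prop.
Hypotheses (HU : upset le U) (HjU : j U = U) (HV : upset le V) (HjV : j V = V).

Lemma I_and_eq : I_and I U V = cap U V.
Proof.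
  apply pred_ext; intro x; split.
  - intro Hx. split.
    + rewrite <- HjU. apply (entails_sound and_elim_l HU HV HU).
      intros psi [<- | []]. simpl. rewrite HjU, HjV. exact Hx.
    + rewrite <- HjV. apply (entails_sound and_elim_r HU HV HU).
      intros psi [<- | []]. simpl. rewrite HjU, HjV. exact Hx.
  - intros [HUx HVx]. rewrite <- HjU, <- HjV. apply (entails_sound and_intro HU HV HU).
    intros psi [<- | [<- | []]]; simpl; rewrite ?HjU, ?HjV; assumption.
Qed.

Lemma I_imp_sub_heyting : subset (I_imp I U V) (heyting_imp le U V).
Proof.
  intros x Hx y [Hxy HUy].
  assert (Hy : I_imp I U V y)
    by exact (proj1 (I_imp_fixed U V (conj HU HjU) (conj HV HjV)) x y Hxy Hx).
  rewrite <- HjV. apply (entails_sound imp_elim HU HV HU).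
  intros psi [<- | [<- | []]]; simpl; rewrite ?HjU, ?HjV; assumption.
Qed.

End FixedArguments.

Lemma I_imp_monotone {U A B} : fixed le j U -> fixed le j A -> fixed le j B -> subset A B ->
  subset (I_imp I U A) (I_imp I U B).
Proof.
  intros [HU HjU] [HA HjA] [HB HjB] HAB x Hx.
  rewrite <- HjU, <- HjB. apply (entails_sound imp_and_elim_r HU HA HB).
  intros psi [<- | []]. simpl. rewrite HjU, HjA, HjB, I_and_eq by assumption.
  rewrite cap_eq_l by assumption. exact Hx.
Qed.

Lemma heyting_sub_I_imp U V : fixed le j U -> fixed le j V ->
  subset (heyting_imp le U V) (I_imp I U V).
Proof.
  intros [HU HjU] [HV HjV] x Hx.
  pose (W := j (up le x)).
  assert (HW : upset le W) by apply j_upset, upset_up.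
  assert (HjW : j W = W) by apply (proj2 (fixed_j (upset_up x))).
  assert (HUW_fixed : fixed le j (cap U W)).
  { split; [now apply upset_cap |]. now rewrite j_cap, HjU, HjW. }
  assert (HUW_V : subset (cap U W) V).
  { unfold W. rewrite <- HjU at 1. rewrite <- j_cap by (apply upset_up || assumption).
    rewrite <- HjV. apply j_monotone; [now apply upset_cap, upset_up | assumption |].
    intros y [HUy Hxy]. apply Hx. split; assumption. }
  apply (I_imp_monotone (conj HU HjU) HUW_fixed (conj HV HjV) HUW_V).
  rewrite <- (I_and_eq _ _ HU HjU HW HjW), <- HjU.
  apply (entails_sound imp_and_intro HU HU (upset_up x)).
  intros psi [<- | []]. apply j_inflationary; [apply upset_up | apply le_refl].
Qed.

Lemma I_imp_eq U V : fixed le j U -> fixed le j V -> I_imp I U V = heyting_imp le U V.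
Proof.
  intros [HU HjU] [HV HjV]. apply pred_ext; intro x; split.
  - apply I_imp_sub_heyting; assumption.
  - apply heyting_sub_I_imp; split; assumption.
Qed.

Lemma I_imp_of_subset U V x : fixed le j U -> fixed le j V -> subset U V -> I_imp I U V x.
Proof.
  intros HU HV HUV. rewrite I_imp_eq by assumption.
  intros y [_ HUy]. exact (HUV y HUy).
Qed.

Lemma I_or_eq U V : fixed le j U -> fixed le j V -> I_or I U V = j (cup U V).
Proof.
  intros [HU HjU] [HV HjV].
  assert (HUV : upset le (cup U V)) by now apply upset_cup.
  apply pred_ext; intro x; split.
  - intro Hx.
    assert (HjUV : fixed le j (j (cup U V))) by now apply fixed_j.
    assert (HU_sub : subset U (j (cup U V)))
      by (intros y HUy; apply j_inflationary; [exact HUV | now left]).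
    assert (HV_sub : subset V (j (cup U V)))
      by (intros y HVy; apply j_inflationary; [exact HUV | now right]).
    apply (entails_sound or_elim HU HV HUV).
    intros psi [<- | [<- | [<- | []]]]; simpl; rewrite ?HjU, ?HjV.
    + apply I_imp_of_subset; [split | |]; assumption.
    + apply I_imp_of_subset; [split | |]; assumption.
    + exact Hx.
  - apply j_least; [exact HUV | apply I_or_fixed; split; assumption |].
    intros y [HUy | HVy]; rewrite <- HjU, <- HjV.
    + apply (entails_sound or_intro_l HU HV HU).
      intros psi [<- | []]. simpl. rewrite HjU. exact HUy.
    + apply (entails_sound or_intro_r HU HV HU).
      intros psi [<- | []]. simpl. rewrite HjV. exact HVy.
Qed.

End Interpretation.

End Nucleus.

Theorem theorem2 (X : Type) (le : X -> X -> Prop)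
  (j : (X -> Prop) -> (X -> Prop)) (I : interp X) :
  is_poset le -> nucleus le j -> nuclear_interp le j I -> consistent_IPC le j I ->
  I_bot I = j (@empty X) /\
  (forall U V, fixed le j U -> fixed le j V ->
     I_and I U V = cap U V /\
     I_or I U V = j (cup U V) /\
     I_imp I U V = heyting_imp le U V).
Proof.
  intros [le_refl [le_trans _]] [j_upset [j_infl [j_idem j_cap]]]
    [I_bot_fixed [_ [I_or_fixed I_imp_fixed]]] I_consistent.
  split; [eapply I_bot_eq; eassumption |].
  intros U V HU HV. split; [| split].
  - destruct HU, HV. eapply I_and_eq; eassumption.
  - eapply I_or_eq; eassumption.
  - eapply I_imp_eq; eassumption.
Qed.
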